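(* A semiring $R$ has a zero if and only if the identity relation $\mathrm{id}_R=\{(x,x)\mid x\in R\}$ is a $k$-congruence on $R$. In this case, if $0$ is the zero of $R$, then $\kappa_{\{0\}}=\mathrm{id}_R$.
   Context: A semiring $(R,+,\cdot)$ is a set with two binary operations such that $(R,+)$ is a commutative semigroup, $(R,\cdot)$ is a semigroup, and multiplication distributes over addition from both sides; no additive neutral element or identity is assumed. An element $0\in R$ is a zero of $R$ if $0+r=r$ and $0r=r0=0$ for all $r\in R$. An ideal of $R$ is a nonempty subset $A\subseteq R$ with $a+b\in A$ and $ra,ar\in A$ for all $a,b\in A$, $r\in R$. A congruence on $R$ is an equivalence relation $\equiv$ such that $a\equiv b$ implies $a+c\equiv b+c$, $ac\equiv bc$, $ca\equiv cb$ for all $a,b,c\in R$. For an ideal $A$, $\kappa_A$ is the congruence defined by $x\,\kappa_A\,y$ iff $x+a=y+b$ for some $a,b\in A$. A congruence $\theta$ is a $k$-congruence if $\theta=\kappa_A$ for some ideal $A$ of $R$. Throughout, $|R|\geq 2$. *)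

(* Semirings without assumed zero or identity. *)

Record semiring := {
  carrier :> Type;
  sadd : carrier -> carrier -> carrier;
  smul : carrier -> carrier -> carrier;
  sadd_assoc : forall a b c, sadd a (sadd b c) = sadd (sadd a b) c;
  sadd_comm : forall a b, sadd a b = sadd b a;
  smul_assoc : forall a b c, smul a (smul b c) = smul (smul a b) c;
  smul_addl : forall a b c, smul (sadd a b) c = sadd (smul a c) (smul b c);
  smul_addr : forall a b c, smul a (sadd b c) = sadd (smul a b) (smul a c)
}.

Arguments sadd {s}.
Arguments smul {s}.

Definition is_zero (R : semiring) (z : R) : Prop :=
  forall r : R, sadd z r = r /\ smul z r = z /\ smul r z = z.

Definition has_zero (R : semiring) : Prop := exists z : R, is_zero R z.

Definition is_ideal (R : semiring) (A : R -> Prop) : Prop :=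
  (exists a, A a) /\
  (forall a b, A a -> A b -> A (sadd a b)) /\
  (forall r a, A a -> A (smul r a) /\ A (smul a r)).

Definition kappa (R : semiring) (A : R -> Prop) : R -> R -> Prop :=
  fun x y => exists a b, A a /\ A b /\ sadd x a = sadd y b.

Definition rel_eq (R : Type) (r s : R -> R -> Prop) : Prop :=
  forall x y, r x y <-> s x y.

Definition id_rel (R : Type) : R -> R -> Prop := fun x y => x = y.

(* theta is a k-congruence: theta = kappa_A for some ideal A.
   (kappa_A is always a congruence for an ideal A.) *)
Definition is_k_congruence (R : semiring) (theta : R -> R -> Prop) : Prop :=
  exists A : R -> Prop, is_ideal R A /\ rel_eq R theta (kappa R A).

(* If id_R = kappa_A, then a + z = z + a for a, z in A forces A = {z}; then
   r + z = r + (z + z) gives r = r + z, and ideal closure puts rz, zr in A = {z}.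
   Conversely a zero z makes x + z = y + z collapse to x = y. *)

Section KCongruence.

Variable R : semiring.

Lemma is_ideal_zero (z : R) : is_zero R z -> is_ideal R (fun x => x = z).
Proof.
  intros Hz. split; [exists z; reflexivity|]. split.
  - intros a b -> ->. apply (Hz z).
  - intros r a ->. split; apply Hz.
Qed.

Lemma kappa_zero (z : R) :
  is_zero R z -> rel_eq R (kappa R (fun x => x = z)) (id_rel R).
Proof.
  intros Hz x y; unfold kappa, id_rel; split.
  - intros [a [b [-> [-> E]]]].
    rewrite (sadd_comm _ x), (sadd_comm _ y), (proj1 (Hz x)), (proj1 (Hz y)) in E.
    exact E.
  - intros ->. exists z, z; auto.
Qed.

Section KappaIdentity.

Variable A : R -> Prop.
Hypothesis A_ideal : is_ideal R A.
Hypothesis kappa_A_id : rel_eq R (id_rel R) (kappa R A).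

Lemma kappa_id_singleton (z a : R) : A z -> A a -> a = z.
Proof.
  intros Hz Ha. apply (proj2 (kappa_A_id a z)).
  exists z, a. repeat split; auto. apply sadd_comm.
Qed.

Lemma kappa_id_is_zero (z : R) : A z -> is_zero R z.
Proof.
  destruct A_ideal as [_ [Hadd Hmul]].
  intros Hz r. repeat split.
  - assert (E : id_rel R r (sadd r z)).
    { apply (proj2 (kappa_A_id _ _)). exists z, z. repeat split; auto.
      rewrite <- sadd_assoc. f_equal. symmetry.
      apply (kappa_id_singleton z); auto. }
    rewrite sadd_comm. symmetry. exact E.
  - apply (kappa_id_singleton z); auto. apply (Hmul r z Hz).
  - apply (kappa_id_singleton z); auto. apply (Hmul r z Hz).
Qed.

End KappaIdentity.

Lemma has_zero_iff_id_k_congruence : has_zero R <-> is_k_congruence R (id_rel R).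
Proof.
  split.
  - intros [z Hz]. exists (fun x => x = z). split; [exact (is_ideal_zero z Hz)|].
    intros x y. apply iff_sym, (kappa_zero z Hz).
  - intros [A [HA Heq]]. destruct (proj1 HA) as [z Hz].
    exists z. exact (kappa_id_is_zero A HA Heq z Hz).
Qed.

End KCongruence.

Theorem theorem4p2 (R : semiring) (Hcard : exists x y : R, x <> y) :
  (has_zero R <-> is_k_congruence R (id_rel R)) /\
  (forall z : R, is_zero R z -> rel_eq R (kappa R (fun x => x = z)) (id_rel R)).
Proof.
  split.
  - exact (has_zero_iff_id_k_congruence R).
  - exact (kappa_zero R).
Qed.
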